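(* Let $m>0$ and let $\chi\in C_c^\infty(\mathbb R)$ be even with $\chi(z)=1$ for $|z|<z_0$, $\chi(z)=0$ for $|z|>2z_0$, $z_0\ll1$. Suppose $\mathcal E$ is twice differentiable on $(0,2z_0)$ with $|\partial_z^j\mathcal E(z)|\lesssim|\partial_z^j(\log z)^{-2}|$ for $j=0,1,2$ and $0<z<2z_0$. Then for $t>2$, $$\Big|\int_0^\infty e^{-it\sqrt{z^2+m^2}}\frac{z\chi(z)}{\sqrt{z^2+m^2}}\mathcal E(z)\,dz\Big|\lesssim\frac1{t\log^2t}.$$ *)

From Stdlib Require Import Reals Lra.
Open Scope R_scope.

Definition smooth (f : R -> R) : Prop :=
  exists D : nat -> R -> R,
    (forall x, D O x = f x) /\
    (forall n x, derivable_pt_lim (D n) x (D (S n) x)).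

Definition amp (m : R) (chi E : R -> R) (z : R) : R :=
  z * chi z * E z / sqrt (z ^ 2 + m ^ 2).

(* Real and imaginary parts of e^{-it sqrt(z^2+m^2)} * amp z. *)
Definition re_integrand (m t : R) (chi E : R -> R) (z : R) : R :=
  cos (t * sqrt (z ^ 2 + m ^ 2)) * amp m chi E z.
Definition im_integrand (m t : R) (chi E : R -> R) (z : R) : R :=
  - sin (t * sqrt (z ^ 2 + m ^ 2)) * amp m chi E z.

(* Write phi(z) = sqrt (z^2 + m^2); since phi' = z / phi, the amplitude is (chi E) phi', so one
   can integrate by parts against the phase e^{-it phi}.  Split [0, 2 z0] at d = t^{-1/2}.  On
   [0, d] the integrand is at most z / log^2 z, which integrates to about d^2 / log^2 d, i.e.
   1 / (t log^2 t).  On [d, 2 z0] two integrations by parts leave a boundary term at d of size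
   1 / (t log^2 d) and a remainder dominated by t^{-2} |log z|^{-3} z^{-3}, whose integral from d
   is about t^{-2} d^{-2} |log d|^{-3} = 1 / (t log^3 t).  Since E is only controlled on the open
   interval (0, 2 z0), the integration by parts is done on [d, b] with b close to 2 z0, where the
   boundary terms are small because chi and chi' vanish at 2 z0.  For t <= z0^{-2} the trivial
   bound suffices. *)

From Coquelicot Require Import Coquelicot.
From Stdlib Require Import Reals Lra FunctionalExtensionality.
Open Scope R_scope.

Lemma ln_lt_self x : 0 < x -> ln x < x.
Proof.
  intros hx. pose proof (exp_ineq1_le (ln x)) as h. rewrite exp_ln in h by exact hx. lra.
Qed.

Lemma exp_3_le_27 : exp 3 <= 27.
Proof.
  replace 3 with (1 + 1 + 1) by ring. rewrite !exp_plus.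
  pose proof exp_le_3. pose proof (exp_pos 1).
  replace 27 with (3 * 3 * 3) by ring.
  apply Rmult_le_compat; nra.
Qed.

Lemma ln_le_neg3 z : 0 < z -> z <= / 27 -> ln z <= -3.
Proof.
  intros hz hz27.
  assert (h3 : ln (exp 3) <= ln 27) by (apply ln_le; [apply exp_pos | apply exp_3_le_27]).
  rewrite ln_exp in h3.
  apply Rle_trans with (ln (/ 27)); [apply ln_le; lra |].
  rewrite ln_Rinv; lra.
Qed.

Definition ilog (z : R) : R := / - ln z.

Lemma ilog_bounds z : 0 < z <= / 27 -> 0 < ilog z <= / 3.
Proof.
  intros hz. pose proof (ln_le_neg3 z (proj1 hz) (proj2 hz)).
  unfold ilog. split; [apply Rinv_0_lt_compat | apply Rinv_le_contravar]; lra.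
Qed.

Lemma ilog_div_ge_1 z : 0 < z < 1 -> 1 <= ilog z / z.
Proof.
  intros hz.
  assert (hL : ln z < 0) by (rewrite <- ln_1; apply ln_increasing; lra).
  pose proof (ln_lt_self (/ z) ltac:(apply Rinv_0_lt_compat; lra)) as h.
  rewrite ln_Rinv in h by lra.
  assert (hLz : - ln z * z < 1).
  { apply Rmult_lt_reg_r with (/ z); [apply Rinv_0_lt_compat; lra|].
    rewrite Rmult_assoc, Rinv_r, Rmult_1_l, Rmult_1_r by lra. exact h. }
  replace (ilog z / z) with (/ (- ln z * z)) by (unfold ilog; field; lra).
  rewrite <- Rinv_1. apply Rinv_le_contravar; nra.
Qed.

Lemma mul_ilog_sq_le y z : 0 <= y <= z -> z <= / 27 -> y * ilog y ^ 2 <= z * ilog z ^ 2.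
Proof.
  intros hyz hz. destruct (Req_dec y 0) as [->|hy0]; [rewrite Rmult_0_l; apply Rmult_le_pos; [lra | apply pow2_ge_0]|].
  destruct (ilog_bounds y ltac:(lra)) as [hy _].
  assert (hle : ilog y <= ilog z).
  { pose proof (ln_le_neg3 z ltac:(lra) hz).
    unfold ilog. apply Rinv_le_contravar; [lra|].
    apply Ropp_le_contravar, ln_le; lra. }
  apply Rmult_le_compat; try lra; [apply pow2_ge_0 | apply pow_incr; lra].
Qed.

Lemma mul_ilog_sq_le_1 z : 0 <= z <= / 27 -> z * ilog z ^ 2 <= 1.
Proof.
  intros hz. destruct (Req_dec z 0) as [->|hz0]; [lra|].
  destruct (ilog_bounds z ltac:(lra)). nra.
Qed.

Lemma log_power_bounds_ilog K z e0 e1 e2 : 0 <= K -> 0 < z <= / 27 ->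
  Rabs e0 <= K * Rabs (/ (ln z) ^ 2) ->
  Rabs e1 <= K * Rabs (- 2 / ((ln z) ^ 3 * z)) ->
  Rabs e2 <= K * Rabs (6 / ((ln z) ^ 4 * z ^ 2) + 2 / ((ln z) ^ 3 * z ^ 2)) ->
  Rabs e0 <= K * ilog z ^ 2 /\ Rabs e1 <= 2 * K * (ilog z ^ 3 / z) /\
  Rabs e2 <= 2 * K * (ilog z ^ 3 / z ^ 2).
Proof.
  intros hK hz b0 b1 b2.
  pose proof (ln_le_neg3 z (proj1 hz) (proj2 hz)) as hl. destruct (ilog_bounds z hz) as [hv hv3].
  assert (hw1 : 0 <= ilog z ^ 3 / z)
    by (unfold Rdiv; apply Rmult_le_pos; [apply pow_le | apply Rlt_le, Rinv_0_lt_compat]; lra).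
  assert (hw2 : 0 <= ilog z ^ 3 / z ^ 2)
    by (unfold Rdiv; apply Rmult_le_pos; [apply pow_le | apply Rlt_le, Rinv_0_lt_compat, pow_lt]; lra).
  replace (/ ln z ^ 2) with (ilog z ^ 2) in b0 by (unfold ilog; field; lra).
  replace (- 2 / (ln z ^ 3 * z)) with (2 * (ilog z ^ 3 / z)) in b1 by (unfold ilog; field; lra).
  replace (6 / (ln z ^ 4 * z ^ 2) + 2 / (ln z ^ 3 * z ^ 2)) with ((6 * ilog z - 2) * (ilog z ^ 3 / z ^ 2))
    in b2 by (unfold ilog; field; lra).
  rewrite (Rabs_right (ilog z ^ 2)) in b0 by (apply Rle_ge, pow2_ge_0).
  rewrite (Rabs_right (2 * _)) in b1 by lra.
  rewrite Rabs_mult, (Rabs_right (_ / _)) in b2 by lra.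
  assert (Rabs (6 * ilog z - 2) <= 2) by (apply Rabs_le; lra).
  split; [lra | split; [lra|]].
  assert (Rabs (6 * ilog z - 2) * (ilog z ^ 3 / z ^ 2) <= 2 * (ilog z ^ 3 / z ^ 2))
    by (apply Rmult_le_compat_r; lra).
  nra.
Qed.

Lemma sqrt_sum_sq_le x y : sqrt (x ^ 2 + y ^ 2) <= Rabs x + Rabs y.
Proof.
  pose proof (Rabs_pos x). pose proof (Rabs_pos y).
  rewrite <- (sqrt_pow2 (Rabs x + Rabs y)) by lra.
  apply sqrt_le_1_alt. rewrite <- (pow2_abs x), <- (pow2_abs y). nra.
Qed.

Lemma MVT_abs_dominated (G G' P P' : R -> R) a b : a < b ->
  (forall c, a <= c <= b -> derivable_pt_lim G c (G' c)) ->
  (forall c, a <= c <= b -> derivable_pt_lim P c (P' c)) ->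
  (forall c, a <= c <= b -> Rabs (G' c) <= P' c) ->
  Rabs (G b - G a) <= P b - P a.
Proof.
  intros hab hG hP hdom.
  destruct (MVT_cor2 (fun x => G x - P x) (fun x => G' x - P' x) a b hab) as [c [ec hc]];
    [intros x hx; apply derivable_pt_lim_minus; auto |].
  destruct (MVT_cor2 (fun x => G x + P x) (fun x => G' x + P' x) a b hab) as [e [ee he]];
    [intros x hx; apply derivable_pt_lim_plus; auto |].
  pose proof (proj1 (Rabs_le_between _ _) (hdom c ltac:(lra))) as hc'.
  pose proof (proj1 (Rabs_le_between _ _) (hdom e ltac:(lra))) as he'.
  apply Rabs_le. split; nra.
Qed.

Lemma is_derive_RInt_interval (f : R -> R) lo hi c x :
  (forall y, lo < y < hi -> continuous f y) -> lo < c < hi -> lo < x < hi ->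
  is_derive (fun y => RInt f c y) x (f x).
Proof.
  intros hf hc hx. apply is_derive_RInt with (a := c); [| now apply hf].
  apply locally_interval with lo hi; simpl; try lra.
  intros y hy1 hy2. apply RInt_correct, ex_RInt_continuous.
  intros z hz. apply hf. unfold Rmin, Rmax in hz. destruct (Rle_dec c y); lra.
Qed.

Lemma is_derive_continuity_pt (f : R -> R) x l : is_derive f x l -> continuity_pt f x.
Proof. intros h. apply derivable_continuous_pt. exists l. now apply is_derive_Reals. Qed.

Lemma continuity_pt_small_near (f : R -> R) x eps : continuity_pt f x -> f x = 0 -> 0 < eps ->
  exists d, 0 < d /\ forall y, Rabs (y - x) < d -> Rabs (f y) < eps.
Proof.
  intros hc h0 he. destruct (hc eps he) as [d [hd H]]. exists d. split; [exact hd|].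
  intros y hy. destruct (Req_dec y x) as [->|hne]; [rewrite h0, Rabs_R0; exact he|].
  specialize (H y). simpl in H. unfold Rdist in H. rewrite h0, Rminus_0_r in H.
  apply H. split; [split; [exact I | auto] | exact hy].
Qed.

Lemma continuity_pt_eq0_of_right (f : R -> R) a :
  continuity_pt f a -> (forall z, a < z -> f z = 0) -> f a = 0.
Proof.
  intros hc hz. destruct (Req_dec (f a) 0) as [e|ne]; [exact e|]. exfalso.
  assert (he : 0 < Rabs (f a)) by (apply Rabs_pos_lt; exact ne).
  destruct (hc _ he) as [d [hd H]].
  specialize (H (a + d / 2)). simpl in H. unfold Rdist in H.
  rewrite hz, Rminus_0_l, Rabs_Ropp in H by lra.
  enough (Rabs (f a) < Rabs (f a)) by lra. apply H. split.
  - split; [exact I | lra].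
  - replace (a + d / 2 - a) with (d / 2) by ring. rewrite Rabs_right; lra.
Qed.

Lemma is_derive_eq0_of_right (f : R -> R) a z l :
  is_derive f z l -> (forall y, a < y -> f y = 0) -> a < z -> l = 0.
Proof.
  intros hd hz haz.
  assert (h0 : is_derive (fun _ : R => 0) z l).
  { apply is_derive_ext_loc with f; [| exact hd].
    apply locally_interval with a p_infty; simpl; auto. }
  apply is_derive_unique in h0. rewrite <- h0. apply Derive_const.
Qed.

Lemma edge_values_of_eq0_right (f f' f'' : R -> R) a :
  (forall x, is_derive f x (f' x)) -> (forall x, is_derive f' x (f'' x)) ->
  (forall z, a < z -> f z = 0) -> f a = 0 /\ f' a = 0.
Proof.
  intros hf hf' h0. split.
  - apply continuity_pt_eq0_of_right; [exact (is_derive_continuity_pt _ _ _ (hf a)) | exact h0].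
  - apply continuity_pt_eq0_of_right; [exact (is_derive_continuity_pt _ _ _ (hf' a))|].
    intros z hz. exact (is_derive_eq0_of_right f a z _ (hf z) h0 hz).
Qed.

Lemma smooth_C2_bounds (chi : R -> R) a b : smooth chi -> a <= b ->
  exists (D1 D2 : R -> R) (M0 M1 M2 : R),
    (forall x, is_derive chi x (D1 x)) /\ (forall x, is_derive D1 x (D2 x)) /\
    forall z, a <= z <= b -> Rabs (chi z) <= M0 /\ Rabs (D1 z) <= M1 /\ Rabs (D2 z) <= M2.
Proof.
  intros [D [hD0 hD]] hab.
  assert (bound : forall k, exists M, forall z, a <= z <= b -> Rabs (D k z) <= M).
  { intros k. destruct (continuity_ab_maj (fun z => Rabs (D k z)) a b hab) as [x [hx _]].
    - intros c _. apply (continuity_pt_comp (D k) Rabs); [| apply Rcontinuity_abs].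
      apply derivable_continuous_pt. exists (D (S k) c). apply hD.
    - exists (Rabs (D k x)). exact hx. }
  destruct (bound O) as [M0 h0]. destruct (bound 1%nat) as [M1 h1]. destruct (bound 2%nat) as [M2 h2].
  exists (D 1%nat), (D 2%nat), M0, M1, M2. split; [|split].
  - intros x. apply is_derive_Reals. rewrite <- (functional_extensionality _ _ hD0). apply hD.
  - intros x. apply is_derive_Reals, hD.
  - intros z hz. rewrite <- hD0. auto.
Qed.

Lemma phase_bounds m z : 0 <= m -> 0 <= z <= 1 -> m <= sqrt (z ^ 2 + m ^ 2) <= sqrt (1 + m ^ 2).
Proof.
  intros hm hz. split.
  - rewrite <- (sqrt_pow2 m) at 1 by exact hm. apply sqrt_le_1_alt. nra.
  - apply sqrt_le_1_alt. nra.
Qed.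

Definition osc (a m t : R) (chi E : R -> R) (z : R) : R :=
  cos (t * sqrt (z ^ 2 + m ^ 2) + a) * amp m chi E z.

(* With ibp_weight = (chi E)' / phi', integrating by parts twice against cos (t phi + a) gives
   osc = osc_primitive' - cos (t phi + a) / t^2 * ibp_weight'. *)
Definition ibp_weight (m : R) (chi D1 E E1 : R -> R) (z : R) : R :=
  (D1 z * E z + chi z * E1 z) * sqrt (z ^ 2 + m ^ 2) / z.

Definition ibp_weight_deriv (m : R) (chi D1 D2 E E1 E2 : R -> R) (z : R) : R :=
  (D2 z * E z + 2 * D1 z * E1 z + chi z * E2 z) * sqrt (z ^ 2 + m ^ 2) / z
  - (D1 z * E z + chi z * E1 z) * m ^ 2 / (sqrt (z ^ 2 + m ^ 2) * z ^ 2).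

Definition osc_primitive (a m t : R) (chi D1 E E1 : R -> R) (z : R) : R :=
  sin (t * sqrt (z ^ 2 + m ^ 2) + a) / t * (chi z * E z)
  + cos (t * sqrt (z ^ 2 + m ^ 2) + a) / t ^ 2 * ibp_weight m chi D1 E E1 z.

Lemma re_integrand_osc m t chi E : re_integrand m t chi E = osc 0 m t chi E.
Proof.
  apply functional_extensionality. intros z. unfold re_integrand, osc. now rewrite Rplus_0_r.
Qed.

Lemma im_integrand_osc m t chi E : im_integrand m t chi E = osc (PI / 2) m t chi E.
Proof.
  apply functional_extensionality. intros z.
  unfold im_integrand, osc. rewrite cos_plus, cos_PI2, sin_PI2. ring.
Qed.

Lemma osc_abs_le_amp a m t chi E z : Rabs (osc a m t chi E z) <= Rabs (amp m chi E z).
Proof.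
  unfold osc. rewrite Rabs_mult. pose proof (COS_bound (t * sqrt (z ^ 2 + m ^ 2) + a)).
  assert (Rabs (cos (t * sqrt (z ^ 2 + m ^ 2) + a)) <= 1) by (apply Rabs_le; lra).
  pose proof (Rabs_pos (amp m chi E z)). pose proof (Rabs_pos (cos (t * sqrt (z ^ 2 + m ^ 2) + a))).
  nra.
Qed.

Lemma osc_continuous a m t chi E x : 0 < m -> ex_derive chi x -> ex_derive E x ->
  continuous (osc a m t chi E) x.
Proof.
  intros hm hchi hE. apply (ex_derive_continuous (K := R_AbsRing) (V := R_NormedModule)).
  unfold osc, amp. auto_derive.
  assert (0 < x * (x * 1) + m * (m * 1)) by nra.
  repeat split; auto. apply Rgt_not_eq, sqrt_lt_R0. lra.
Qed.

Lemma osc_primitive_derive a m t chi D1 D2 E E1 E2 x : x <> 0 -> t <> 0 ->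
  is_derive chi x (D1 x) -> is_derive D1 x (D2 x) -> is_derive E x (E1 x) -> is_derive E1 x (E2 x) ->
  is_derive (osc_primitive a m t chi D1 E E1) x
    (osc a m t chi E x + cos (t * sqrt (x ^ 2 + m ^ 2) + a) / t ^ 2 * ibp_weight_deriv m chi D1 D2 E E1 E2 x).
Proof.
  intros hx ht hchi hD1 hE hE1.
  assert (hpos : 0 < x ^ 2 + m ^ 2) by nra.
  pose proof (sqrt_lt_R0 _ hpos) as hs. pose proof (sqrt_sqrt _ (Rlt_le _ _ hpos)) as hss.
  unfold osc_primitive, ibp_weight, osc, amp, ibp_weight_deriv. auto_derive.
  - repeat split; try (eexists; eassumption); lra.
  - replace (Derive (fun y => chi y) x) with (D1 x) by (symmetry; now apply is_derive_unique).
    replace (Derive (fun y => D1 y) x) with (D2 x) by (symmetry; now apply is_derive_unique).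
    replace (Derive (fun y => E y) x) with (E1 x) by (symmetry; now apply is_derive_unique).
    replace (Derive (fun y => E1 y) x) with (E2 x) by (symmetry; now apply is_derive_unique).
    replace (x * (x * 1) + m * (m * 1)) with (x ^ 2 + m ^ 2) by ring.
    set (p := sqrt (x ^ 2 + m ^ 2)) in *.
    replace (m ^ 2) with (p * p - x ^ 2) by lra.
    field. lra.
Qed.

(* Its derivative dominates ilog z ^ 3 / z ^ 3 as soon as ilog z <= 1/3. *)
Definition log_majorant (z : R) : R := - (ilog z ^ 3 / z ^ 2).

Lemma log_majorant_derive z : 0 < z < 1 ->
  derivable_pt_lim log_majorant z ((2 - 3 * ilog z) * (ilog z ^ 3 / z ^ 3)).
Proof.
  intros hz. assert (hl : ln z < 0) by (rewrite <- ln_1; apply ln_increasing; lra).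
  apply is_derive_Reals. unfold log_majorant, ilog. auto_derive.
  - repeat split; nra.
  - field. lra.
Qed.

Section OscillatoryIntegral.

Variables (m z0 K M0 M1 M2 : R) (chi D1 D2 E E1 E2 : R -> R).
Hypothesis m_pos : 0 < m.
Hypothesis z0_pos : 0 < z0.
Hypothesis z0_small : 2 * z0 <= / 27.
Hypothesis K_nonneg : 0 <= K.
Hypothesis chi_derive : forall x, is_derive chi x (D1 x).
Hypothesis D1_derive : forall x, is_derive D1 x (D2 x).
Hypothesis chi_bounds : forall z, 0 <= z <= 2 * z0 ->
  Rabs (chi z) <= M0 /\ Rabs (D1 z) <= M1 /\ Rabs (D2 z) <= M2.
Hypothesis chi_edge : chi (2 * z0) = 0.
Hypothesis D1_edge : D1 (2 * z0) = 0.
Hypothesis E_derive : forall z, 0 < z < 2 * z0 -> is_derive E z (E1 z) /\ is_derive E1 z (E2 z).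
Hypothesis E_bounds : forall z, 0 < z < 2 * z0 ->
  Rabs (E z) <= K * ilog z ^ 2 /\ Rabs (E1 z) <= 2 * K * (ilog z ^ 3 / z) /\
  Rabs (E2 z) <= 2 * K * (ilog z ^ 3 / z ^ 2).

Let c_phase := sqrt (1 + m ^ 2).
Let c_amp := M0 * K / m.
Let c_ibp := K * c_phase * (M2 + 4 * M1 + 2 * M0) + K * m * (M1 + 2 * M0).
Let c_decay := c_amp + M0 * K + (M1 + 2 * M0) * K * c_phase + c_ibp.

Lemma chi_bounds_nonneg : 0 <= M0 /\ 0 <= M1 /\ 0 <= M2.
Proof.
  destruct (chi_bounds 0 ltac:(lra)) as [h0 [h1 h2]].
  pose proof (Rabs_pos (chi 0)). pose proof (Rabs_pos (D1 0)). pose proof (Rabs_pos (D2 0)). lra.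
Qed.

Lemma c_phase_nonneg : 0 <= c_phase.
Proof. apply sqrt_pos. Qed.

Lemma c_amp_nonneg : 0 <= c_amp.
Proof.
  destruct chi_bounds_nonneg as [h0 _]. unfold c_amp, Rdiv.
  apply Rmult_le_pos; [nra | apply Rlt_le, Rinv_0_lt_compat, m_pos].
Qed.

Lemma c_ibp_nonneg : 0 <= c_ibp.
Proof.
  destruct chi_bounds_nonneg as [h0 [h1 h2]]. pose proof c_phase_nonneg.
  unfold c_ibp. apply Rplus_le_le_0_compat; repeat apply Rmult_le_pos; lra.
Qed.

Lemma small_z_bounds z : 0 < z < 2 * z0 ->
  0 < ilog z <= / 3 /\ 1 <= / z /\ 1 <= ilog z / z /\ m <= sqrt (z ^ 2 + m ^ 2) <= c_phase.
Proof.
  intros hz. split; [|split; [|split]].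
  - apply ilog_bounds. lra.
  - rewrite <- Rinv_1. apply Rinv_le_contravar; lra.
  - apply ilog_div_ge_1. lra.
  - apply phase_bounds; lra.
Qed.

Lemma amp_abs_le z : 0 <= z <= 2 * z0 -> Rabs (amp m chi E z) <= c_amp * (z * ilog z ^ 2).
Proof.
  intros hz. pose proof c_amp_nonneg.
  assert (hrhs : 0 <= c_amp * (z * ilog z ^ 2)) by (apply Rmult_le_pos, Rmult_le_pos, pow2_ge_0; lra).
  destruct (Req_dec z 0) as [->|hz0].
  { unfold amp, Rdiv. rewrite !Rmult_0_l, Rabs_R0. lra. }
  destruct (Req_dec z (2 * z0)) as [->|hz2].
  { unfold amp, Rdiv. rewrite chi_edge, Rmult_0_r, !Rmult_0_l, Rabs_R0. lra. }
  assert (hz' : 0 < z < 2 * z0) by lra.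
  destruct (small_z_bounds z hz') as [_ [_ [_ [hp _]]]].
  destruct (chi_bounds z ltac:(lra)) as [hchi _]. destruct (E_bounds z hz') as [hE _].
  unfold amp, c_amp, Rdiv. rewrite !Rabs_mult, Rabs_inv, (Rabs_right z), (Rabs_right (sqrt _)) by lra.
  apply Rle_trans with (z * M0 * (K * ilog z ^ 2) * / m).
  - apply Rmult_le_compat; try apply Rlt_le, Rinv_0_lt_compat; try lra.
    + repeat apply Rmult_le_pos; try apply Rabs_pos; lra.
    + apply Rmult_le_compat; try apply Rmult_le_pos; try apply Rabs_pos; try lra.
      apply Rmult_le_compat_l; lra.
    + apply Rinv_le_contravar; lra.
  - right. field. lra.
Qed.

Lemma ibp_weight_abs_le z : 0 < z < 2 * z0 ->
  Rabs (ibp_weight m chi D1 E E1 z) <=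
  (Rabs (D1 z) + 2 * Rabs (chi z)) * K * c_phase * (ilog z ^ 3 / z ^ 2).
Proof.
  intros hz. destruct (small_z_bounds z hz) as [[hv hv3] [hu [hvu [hp1 hp2]]]].
  destruct (E_bounds z hz) as [hE [hE1 _]].
  pose proof (Rabs_pos (chi z)) as hc. pose proof (Rabs_pos (D1 z)) as hd.
  unfold ibp_weight, Rdiv in *. set (v := ilog z) in *. set (u := / z) in *.
  replace (/ z ^ 2) with (u ^ 2) by (unfold u; field; lra).
  assert (hv2 : K * v ^ 2 <= K * (v ^ 3 * u)) by (apply Rmult_le_compat_l; nra).
  assert (hsum : Rabs (D1 z * E z + chi z * E1 z) <= (Rabs (D1 z) + 2 * Rabs (chi z)) * K * (v ^ 3 * u)).
  { eapply Rle_trans; [apply Rabs_triang|]. rewrite !Rabs_mult.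
    assert (Rabs (D1 z) * Rabs (E z) <= Rabs (D1 z) * (K * (v ^ 3 * u)))
      by (apply Rmult_le_compat_l; lra).
    assert (Rabs (chi z) * Rabs (E1 z) <= Rabs (chi z) * (2 * K * (v ^ 3 * u)))
      by (apply Rmult_le_compat_l; lra).
    lra. }
  rewrite !Rabs_mult, (Rabs_right (sqrt _)), (Rabs_right u) by lra.
  apply Rle_trans with ((Rabs (D1 z) + 2 * Rabs (chi z)) * K * (v ^ 3 * u) * c_phase * u).
  - apply Rmult_le_compat_r; [lra|]. apply Rmult_le_compat; try lra; apply Rabs_pos.
  - right. ring.
Qed.

Lemma ilog_monomials_le z : 0 < z < 2 * z0 ->
  ilog z ^ 2 / z <= ilog z ^ 3 / z ^ 3 /\ ilog z ^ 3 / z ^ 2 <= ilog z ^ 3 / z ^ 3 /\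
  ilog z ^ 2 / z ^ 2 <= ilog z ^ 3 / z ^ 3.
Proof.
  intros hz. destruct (small_z_bounds z hz) as [[hv _] [hu [hvu _]]].
  unfold Rdiv in *. set (v := ilog z) in *. set (u := / z) in *.
  replace (/ z ^ 2) with (u ^ 2) by (unfold u; field; lra).
  replace (/ z ^ 3) with (u ^ 3) by (unfold u; field; lra).
  assert (hvuu : 1 <= v * u * u) by nra.
  split; [|split].
  - replace (v ^ 3 * u ^ 3) with (v ^ 2 * u * (v * u * u)) by ring.
    assert (0 <= v ^ 2 * u) by (apply Rmult_le_pos; nra). nra.
  - replace (v ^ 3 * u ^ 3) with (v ^ 3 * u ^ 2 * u) by ring.
    assert (0 <= v ^ 3 * u ^ 2) by (apply Rmult_le_pos; apply pow_le; lra). nra.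
  - replace (v ^ 3 * u ^ 3) with (v ^ 2 * u ^ 2 * (v * u)) by ring.
    assert (0 <= v ^ 2 * u ^ 2) by (apply Rmult_le_pos; apply pow_le; lra). nra.
Qed.

Lemma ibp_numerators_abs_le z : 0 < z < 2 * z0 ->
  Rabs (D2 z * E z + 2 * D1 z * E1 z + chi z * E2 z)
    <= K * (M2 * ilog z ^ 2 + 4 * M1 * (ilog z ^ 3 / z) + 2 * M0 * (ilog z ^ 3 / z ^ 2)) /\
  Rabs (D1 z * E z + chi z * E1 z) <= K * (M1 * ilog z ^ 2 + 2 * M0 * (ilog z ^ 3 / z)).
Proof.
  intros hz. destruct (E_bounds z hz) as [hE [hE1 hE2]].
  destruct (chi_bounds z ltac:(lra)) as [hc0 [hc1 hc2]].
  assert (Rabs (D2 z) * Rabs (E z) <= M2 * (K * ilog z ^ 2))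
    by (apply Rmult_le_compat; auto; apply Rabs_pos).
  assert (Rabs (D1 z) * Rabs (E z) <= M1 * (K * ilog z ^ 2))
    by (apply Rmult_le_compat; auto; apply Rabs_pos).
  assert (Rabs (D1 z) * Rabs (E1 z) <= M1 * (2 * K * (ilog z ^ 3 / z)))
    by (apply Rmult_le_compat; auto; apply Rabs_pos).
  assert (Rabs (chi z) * Rabs (E1 z) <= M0 * (2 * K * (ilog z ^ 3 / z)))
    by (apply Rmult_le_compat; auto; apply Rabs_pos).
  assert (Rabs (chi z) * Rabs (E2 z) <= M0 * (2 * K * (ilog z ^ 3 / z ^ 2)))
    by (apply Rmult_le_compat; auto; apply Rabs_pos).
  split.
  - eapply Rle_trans; [apply Rabs_triang|].
    eapply Rle_trans; [apply Rplus_le_compat_r, Rabs_triang|].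
    rewrite !Rabs_mult, (Rabs_right 2) by lra. lra.
  - eapply Rle_trans; [apply Rabs_triang|]. rewrite !Rabs_mult. lra.
Qed.

Lemma ibp_weight_deriv_abs_le z : 0 < z < 2 * z0 ->
  Rabs (ibp_weight_deriv m chi D1 D2 E E1 E2 z) <= c_ibp * (ilog z ^ 3 / z ^ 3).
Proof.
  intros hz. destruct (small_z_bounds z hz) as [[hv _] [hu [_ [hp1 hp2]]]].
  destruct (ibp_numerators_abs_le z hz) as [hS2 hS1].
  destruct (ilog_monomials_le z hz) as [k1 [k2 k3]].
  destruct chi_bounds_nonneg as [hM0 [hM1 hM2]].
  unfold ibp_weight_deriv, c_ibp, Rdiv in *. set (v := ilog z) in *. set (u := / z) in *.
  set (p := sqrt (z ^ 2 + m ^ 2)) in *.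
  replace (/ z ^ 2) with (u ^ 2) in * by (unfold u; field; lra).
  replace (/ z ^ 3) with (u ^ 3) in * by (unfold u; field; lra).
  replace (/ (p * z ^ 2)) with (/ p * u ^ 2) by (unfold u; field; lra).
  set (S2 := D2 z * E z + 2 * D1 z * E1 z + chi z * E2 z) in *.
  set (S1 := D1 z * E z + chi z * E1 z) in *.
  assert (hw1 : Rabs (p * u) <= c_phase * u) by (rewrite Rabs_right; nra).
  assert (hw2 : Rabs (m ^ 2 * (/ p * u ^ 2)) <= m * u ^ 2).
  { rewrite Rabs_right.
    - replace (m ^ 2 * (/ p * u ^ 2)) with (m * (m / p) * u ^ 2) by (field; lra).
      assert (m / p <= 1) by (apply Rmult_le_reg_r with p; [lra|]; field_simplify; lra).
      apply Rmult_le_compat_r; [nra|].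
      apply Rle_trans with (m * 1); [apply Rmult_le_compat_l|]; lra.
    - apply Rle_ge, Rmult_le_pos; [nra|]. apply Rmult_le_pos; [apply Rlt_le, Rinv_0_lt_compat|]; nra. }
  replace (S2 * p * u - S1 * m ^ 2 * (/ p * u ^ 2))
    with (S2 * (p * u) + - (S1 * (m ^ 2 * (/ p * u ^ 2)))) by ring.
  eapply Rle_trans; [apply Rabs_triang|].
  rewrite Rabs_Ropp, (Rabs_mult S2), (Rabs_mult S1).
  assert (hKphase : 0 <= K * c_phase) by (apply Rmult_le_pos; lra).
  assert (hKm : 0 <= K * m) by (apply Rmult_le_pos; lra).
  apply Rle_trans with (K * (M2 * v ^ 2 + 4 * M1 * (v ^ 3 * u) + 2 * M0 * (v ^ 3 * u ^ 2)) * (c_phase * u)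
                        + K * (M1 * v ^ 2 + 2 * M0 * (v ^ 3 * u)) * (m * u ^ 2)).
  { apply Rplus_le_compat; apply Rmult_le_compat; auto; apply Rabs_pos. }
  pose proof (Rmult_le_compat_l _ _ _ (Rmult_le_pos _ _ hKphase hM2) k1).
  pose proof (Rmult_le_compat_l _ _ _ (Rmult_le_pos _ _ hKphase hM1) k2).
  pose proof (Rmult_le_compat_l _ _ _ (Rmult_le_pos _ _ hKm hM1) k3).
  lra.
Qed.

Lemma osc_primitive_abs_le a t z : 0 < t -> 0 < z < 2 * z0 ->
  Rabs (osc_primitive a m t chi D1 E E1 z) <=
  Rabs (chi z) * K * ilog z ^ 2 / t
  + (Rabs (D1 z) + 2 * Rabs (chi z)) * K * c_phase * (ilog z ^ 3 / z ^ 2) / t ^ 2.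
Proof.
  intros ht hz. destruct (E_bounds z hz) as [hE _].
  pose proof (ibp_weight_abs_le z hz) as hw.
  set (th := t * sqrt (z ^ 2 + m ^ 2) + a).
  assert (hs : Rabs (sin th) <= 1) by (apply Rabs_le, SIN_bound).
  assert (hc : Rabs (cos th) <= 1) by (apply Rabs_le, COS_bound).
  assert (ht1 : 0 < / t) by (apply Rinv_0_lt_compat; lra).
  assert (ht2 : 0 < / t ^ 2) by (apply Rinv_0_lt_compat, pow_lt; lra).
  unfold osc_primitive, Rdiv. fold th.
  eapply Rle_trans; [apply Rabs_triang|].
  rewrite !Rabs_mult, (Rabs_right (/ t)), (Rabs_right (/ t ^ 2)) by lra.
  apply Rplus_le_compat.
  - apply Rle_trans with (1 * / t * (Rabs (chi z) * (K * ilog z ^ 2))).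
    + apply Rmult_le_compat; try apply Rmult_le_pos; try apply Rabs_pos; try lra.
      * apply Rmult_le_compat_r; lra.
      * apply Rmult_le_compat_l; [apply Rabs_pos | lra].
    + right. ring.
  - apply Rle_trans with (1 * / t ^ 2 * ((Rabs (D1 z) + 2 * Rabs (chi z)) * K * c_phase * (ilog z ^ 3 * / z ^ 2))).
    + apply Rmult_le_compat; try apply Rmult_le_pos; try apply Rabs_pos; try lra.
      apply Rmult_le_compat_r; lra.
    + right. ring.
Qed.

Lemma osc_RInt_tail_le a t b : 0 <= b <= 2 * z0 -> ex_RInt (osc a m t chi E) b (2 * z0) ->
  Rabs (RInt (osc a m t chi E) b (2 * z0)) <= (2 * z0 - b) * c_amp.
Proof.
  intros hb hI. apply abs_RInt_le_const; [lra | exact hI |].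
  intros z hz. eapply Rle_trans; [apply osc_abs_le_amp|].
  eapply Rle_trans; [apply amp_abs_le; lra|].
  rewrite <- (Rmult_1_r c_amp) at 2. apply Rmult_le_compat_l; [apply c_amp_nonneg|].
  apply mul_ilog_sq_le_1. lra.
Qed.

Lemma osc_RInt_head_le a t d : 0 < d <= 2 * z0 -> ex_RInt (osc a m t chi E) 0 d ->
  Rabs (RInt (osc a m t chi E) 0 d) <= d * (c_amp * (d * ilog d ^ 2)).
Proof.
  intros hd hI. replace (d * _) with ((d - 0) * (c_amp * (d * ilog d ^ 2))) by ring.
  apply abs_RInt_le_const; [lra | exact hI |].
  intros z hz. eapply Rle_trans; [apply osc_abs_le_amp|].
  eapply Rle_trans; [apply amp_abs_le; lra|].
  apply Rmult_le_compat_l; [apply c_amp_nonneg|]. apply mul_ilog_sq_le; lra.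
Qed.

Lemma ibp_remainder_abs_le a t z : 0 < t -> 0 < z < 2 * z0 ->
  Rabs (cos (t * sqrt (z ^ 2 + m ^ 2) + a) / t ^ 2 * ibp_weight_deriv m chi D1 D2 E E1 E2 z)
  <= c_ibp / t ^ 2 * ((2 - 3 * ilog z) * (ilog z ^ 3 / z ^ 3)).
Proof.
  intros ht hz. pose proof (ibp_weight_deriv_abs_le z hz) as hH.
  destruct (small_z_bounds z hz) as [[hv hv3] _].
  assert (hw : 0 <= ilog z ^ 3 / z ^ 3).
  { unfold Rdiv. apply Rmult_le_pos; [apply pow_le; lra | apply Rlt_le, Rinv_0_lt_compat, pow_lt; lra]. }
  assert (ht2 : 0 < / t ^ 2) by (apply Rinv_0_lt_compat, pow_lt; lra).
  assert (hc : Rabs (cos (t * sqrt (z ^ 2 + m ^ 2) + a)) <= 1) by (apply Rabs_le, COS_bound).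
  unfold Rdiv at 1 3. rewrite !Rabs_mult, (Rabs_right (/ t ^ 2)) by lra.
  apply Rle_trans with (1 * / t ^ 2 * (c_ibp * (ilog z ^ 3 / z ^ 3))).
  - apply Rmult_le_compat; try apply Rmult_le_pos; try apply Rabs_pos; try lra.
    apply Rmult_le_compat_r; lra.
  - replace (c_ibp / t ^ 2 * _) with (/ t ^ 2 * (c_ibp * ((2 - 3 * ilog z) * (ilog z ^ 3 / z ^ 3))))
      by (unfold Rdiv; ring).
    rewrite Rmult_1_l. apply Rmult_le_compat_l; [lra|].
    apply Rmult_le_compat_l; [apply c_ibp_nonneg | nra].
Qed.

Lemma RInt_osc_sub_primitive_derive a t d y : t <> 0 -> 0 < d < 2 * z0 -> 0 < y < 2 * z0 ->
  derivable_pt_lim (fun x => RInt (osc a m t chi E) d x - osc_primitive a m t chi D1 E E1 x) y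
    (- (cos (t * sqrt (y ^ 2 + m ^ 2) + a) / t ^ 2 * ibp_weight_deriv m chi D1 D2 E E1 E2 y)).
Proof.
  intros ht hd hy. destruct (E_derive y hy) as [hE hE1].
  assert (hF : derivable_pt_lim (fun x => RInt (osc a m t chi E) d x) y (osc a m t chi E y)).
  { apply is_derive_Reals, is_derive_RInt_interval with 0 (2 * z0); try lra.
    intros x hx. destruct (E_derive x hx) as [hEx _].
    apply osc_continuous; [exact m_pos | eexists; apply chi_derive | eexists; exact hEx]. }
  assert (hB := osc_primitive_derive a m t chi D1 D2 E E1 E2 y ltac:(lra) ht
                  (chi_derive y) (D1_derive y) hE hE1).
  apply is_derive_Reals in hB.
  replace (- _) with (osc a m t chi E y - (osc a m t chi E y + cos (t * sqrt (y ^ 2 + m ^ 2) + a) / t ^ 2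
                                     * ibp_weight_deriv m chi D1 D2 E E1 E2 y)) by ring.
  exact (derivable_pt_lim_minus _ _ y _ _ hF hB).
Qed.

(* E'' need not be continuous, so the second integration by parts is replaced by a comparison
   of derivatives through the mean value theorem. *)
Lemma osc_RInt_ibp_le a t d b : 0 < t -> 0 < d < b -> b < 2 * z0 ->
  Rabs (RInt (osc a m t chi E) d b - osc_primitive a m t chi D1 E E1 b
        + osc_primitive a m t chi D1 E E1 d) <= c_ibp * (ilog d ^ 3 / d ^ 2) / t ^ 2.
Proof.
  intros ht hdb hb.
  set (Q := fun y => c_ibp / t ^ 2 * log_majorant y).
  set (Q' := fun y => c_ibp / t ^ 2 * ((2 - 3 * ilog y) * (ilog y ^ 3 / y ^ 3))).
  set (G' := fun y => - (cos (t * sqrt (y ^ 2 + m ^ 2) + a) / t ^ 2 * ibp_weight_deriv m chi D1 D2 E E1 E2 y)).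
  assert (hdom : forall y, d <= y <= b -> Rabs (G' y) <= Q' y).
  { intros y hy. unfold G', Q'. rewrite Rabs_Ropp. apply ibp_remainder_abs_le; lra. }
  pose proof (MVT_abs_dominated _ G' Q Q' d b (proj2 hdb)
    (fun y hy => RInt_osc_sub_primitive_derive a t d y ltac:(lra) ltac:(lra) ltac:(lra))
    (fun y hy => derivable_pt_lim_scal _ _ _ _ (log_majorant_derive y ltac:(lra))) hdom) as hmvt.
  cbv beta in hmvt. rewrite RInt_point in hmvt. change (zero : R) with 0 in hmvt.
  match goal with |- Rabs (?I - ?Bb + ?Bd) <= _ => replace (I - Bb + Bd) with (I - Bb - (0 - Bd)) by ring end.
  eapply Rle_trans; [exact hmvt|].
  assert (hc : 0 <= c_ibp / t ^ 2).
  { unfold Rdiv. apply Rmult_le_pos; [apply c_ibp_nonneg | apply Rlt_le, Rinv_0_lt_compat, pow_lt; lra]. }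
  assert (hQb : 0 <= ilog b ^ 3 / b ^ 2).
  { destruct (small_z_bounds b ltac:(lra)) as [[hv _] _]. unfold Rdiv.
    apply Rmult_le_pos; [apply pow_le; lra | apply Rlt_le, Rinv_0_lt_compat, pow_lt; lra]. }
  unfold Q, log_majorant. replace (c_ibp * (ilog d ^ 3 / d ^ 2) / t ^ 2) with (c_ibp / t ^ 2 * (ilog d ^ 3 / d ^ 2))
    by (unfold Rdiv; ring).
  nra.
Qed.

Lemma osc_primitive_abs_le_edge a t b : 0 < t -> z0 <= b < 2 * z0 ->
  Rabs (osc_primitive a m t chi D1 E E1 b) <=
  (Rabs (chi b) + Rabs (D1 b)) * (K / t + 2 * K * c_phase / (z0 ^ 2 * t ^ 2)).
Proof.
  intros ht hb. assert (hb' : 0 < b < 2 * z0) by lra.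
  eapply Rle_trans; [apply osc_primitive_abs_le; lra|].
  destruct (small_z_bounds b hb') as [[hv hv3] _].
  pose proof (Rabs_pos (chi b)). pose proof (Rabs_pos (D1 b)).
  pose proof c_phase_nonneg as hphase.
  assert (hv2 : ilog b ^ 2 <= 1) by nra.
  assert (hv3' : ilog b ^ 3 / b ^ 2 <= / z0 ^ 2).
  { unfold Rdiv. rewrite <- (Rmult_1_l (/ z0 ^ 2)). apply Rmult_le_compat.
    - apply pow_le; lra.
    - apply Rlt_le, Rinv_0_lt_compat, pow_lt; lra.
    - nra.
    - apply Rinv_le_contravar; [apply pow_lt; lra | apply pow_incr; lra]. }
  assert (ht1 : 0 < / t) by (apply Rinv_0_lt_compat; lra).
  assert (ht2 : 0 < / t ^ 2) by (apply Rinv_0_lt_compat, pow_lt; lra).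
  replace (2 * K * c_phase / (z0 ^ 2 * t ^ 2)) with (2 * K * c_phase * / z0 ^ 2 * / t ^ 2)
    by (field; lra).
  unfold Rdiv.
  assert (h1 : Rabs (chi b) * K * ilog b ^ 2 * / t <= Rabs (chi b) * K * / t).
  { apply Rmult_le_compat_r; [lra|]. rewrite <- (Rmult_1_r (Rabs (chi b) * K)) at 2.
    apply Rmult_le_compat_l; [apply Rmult_le_pos|]; lra. }
  assert (h2 : (Rabs (D1 b) + 2 * Rabs (chi b)) * K * c_phase * (ilog b ^ 3 * / b ^ 2) * / t ^ 2
               <= (Rabs (D1 b) + 2 * Rabs (chi b)) * K * c_phase * / z0 ^ 2 * / t ^ 2).
  { apply Rmult_le_compat_r; [lra|].
    apply Rmult_le_compat_l; [repeat apply Rmult_le_pos|]; lra. }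
  assert (h3 : 0 <= Rabs (D1 b) * K * c_phase * / z0 ^ 2 * / t ^ 2).
  { repeat apply Rmult_le_pos; try lra. apply Rlt_le, Rinv_0_lt_compat, pow_lt; lra. }
  assert (h4 : 0 <= Rabs (D1 b) * K * / t) by (repeat apply Rmult_le_pos; lra).
  lra.
Qed.

Lemma osc_edge_terms_small a t eps : 0 < t -> 0 < eps -> ex_RInt (osc a m t chi E) 0 (2 * z0) ->
  exists b, z0 < b < 2 * z0 /\
    Rabs (osc_primitive a m t chi D1 E E1 b) + Rabs (RInt (osc a m t chi E) b (2 * z0)) <= eps.
Proof.
  intros ht heps hI.
  set (Kc := K / t + 2 * K * c_phase / (z0 ^ 2 * t ^ 2)).
  assert (hKc : 0 <= Kc).
  { pose proof c_phase_nonneg as hphase.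
    assert (0 < / t) by (apply Rinv_0_lt_compat; lra).
    assert (0 < / (z0 ^ 2 * t ^ 2)) by (apply Rinv_0_lt_compat, Rmult_lt_0_compat; apply pow_lt; lra).
    unfold Kc, Rdiv. apply Rplus_le_le_0_compat; repeat apply Rmult_le_pos; lra. }
  set (eta := eps / (4 * (Kc + 1))).
  assert (heta : 0 < eta) by (apply Rdiv_lt_0_compat; lra).
  destruct (continuity_pt_small_near chi (2 * z0) eta
    (is_derive_continuity_pt _ _ _ (chi_derive _)) chi_edge heta) as [r1 [hr1 hchi]].
  destruct (continuity_pt_small_near D1 (2 * z0) eta
    (is_derive_continuity_pt _ _ _ (D1_derive _)) D1_edge heta) as [r2 [hr2 hD1]].
  pose proof c_amp_nonneg as hamp.
  set (r := Rmin (Rmin r1 r2) (Rmin z0 (eps / (2 * (c_amp + 1))))).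
  assert (hr : 0 < r) by (apply Rmin_pos; apply Rmin_pos; try apply Rdiv_lt_0_compat; lra).
  assert (hr1' : r <= r1) by (eapply Rle_trans; apply Rmin_l).
  assert (hr2' : r <= r2) by (eapply Rle_trans; [apply Rmin_l | apply Rmin_r]).
  assert (hr3 : r <= z0) by (eapply Rle_trans; [apply Rmin_r | apply Rmin_l]).
  assert (hr4 : r <= eps / (2 * (c_amp + 1))) by (eapply Rle_trans; apply Rmin_r).
  set (b := 2 * z0 - r / 2). exists b. split; [unfold b; lra|].
  assert (hcb : Rabs (chi b) < eta) by (apply hchi; unfold b; rewrite Rabs_left1; lra).
  assert (hDb : Rabs (D1 b) < eta) by (apply hD1; unfold b; rewrite Rabs_left1; lra).
  assert (hB : Rabs (osc_primitive a m t chi D1 E E1 b) <= eps / 2).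
  { eapply Rle_trans; [apply osc_primitive_abs_le_edge; unfold b; lra|]. fold Kc.
    apply Rle_trans with ((2 * eta) * Kc); [apply Rmult_le_compat_r; lra|].
    unfold eta. apply Rmult_le_reg_r with (4 * (Kc + 1)); [lra|]. field_simplify; nra. }
  assert (hT : Rabs (RInt (osc a m t chi E) b (2 * z0)) <= eps / 2).
  { eapply Rle_trans.
    - apply osc_RInt_tail_le; [unfold b; lra|].
      apply (ex_RInt_Chasles_2 (V := R_CompleteNormedModule) _ 0); [unfold b; lra | exact hI].
    - replace (2 * z0 - b) with (r / 2) by (unfold b; ring).
      apply Rle_trans with (eps / (2 * (c_amp + 1)) / 2 * c_amp); [apply Rmult_le_compat_r; lra|].
      apply Rmult_le_reg_r with (4 * (c_amp + 1)); [lra|]. field_simplify; nra. }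
  lra.
Qed.

Lemma osc_RInt_split_le a t d : 0 < t -> 0 < d <= z0 ->
  ex_RInt (osc a m t chi E) 0 (2 * z0) ->
  Rabs (RInt (osc a m t chi E) 0 (2 * z0)) <=
  d * (c_amp * (d * ilog d ^ 2)) + M0 * K * ilog d ^ 2 / t
  + ((M1 + 2 * M0) * K * c_phase + c_ibp) * (ilog d ^ 3 / d ^ 2) / t ^ 2.
Proof.
  intros ht hd hI. set (f := osc a m t chi E). set (B := osc_primitive a m t chi D1 E E1).
  apply Rle_plus_epsilon. intros eps heps.
  destruct (osc_edge_terms_small a t eps ht heps hI) as [b [hb hrem]]. fold f B in hrem.
  assert (hI0d : ex_RInt f 0 d)
    by (apply (ex_RInt_Chasles_1 (V := R_CompleteNormedModule)) with (2 * z0); [lra | exact hI]).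
  assert (hId2 : ex_RInt f d (2 * z0))
    by (apply (ex_RInt_Chasles_2 (V := R_CompleteNormedModule)) with 0; [lra | exact hI]).
  assert (hIdb : ex_RInt f d b)
    by (apply (ex_RInt_Chasles_1 (V := R_CompleteNormedModule)) with (2 * z0); [lra | exact hId2]).
  assert (hIb2 : ex_RInt f b (2 * z0))
    by (apply (ex_RInt_Chasles_2 (V := R_CompleteNormedModule)) with d; [lra | exact hId2]).
  assert (hsplit : RInt f 0 (2 * z0) =
    RInt f 0 d + (RInt f d b - B b + B d) - B d + (B b + RInt f b (2 * z0))).
  { pose proof (RInt_Chasles f 0 d (2 * z0) hI0d hId2) as e1.
    pose proof (RInt_Chasles f d b (2 * z0) hIdb hIb2) as e2.
    unfold plus in e1, e2. simpl in e1, e2. lra. }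
  pose proof (osc_RInt_head_le a t d ltac:(lra) hI0d) as hnear.
  pose proof (osc_RInt_ibp_le a t d b ht ltac:(lra) ltac:(lra)) as hmid.
  fold f B in hnear, hmid.
  assert (hleft : Rabs (B d) <= M0 * K * ilog d ^ 2 / t
                                 + (M1 + 2 * M0) * K * c_phase * (ilog d ^ 3 / d ^ 2) / t ^ 2).
  { eapply Rle_trans; [apply osc_primitive_abs_le; lra|].
    destruct (chi_bounds d ltac:(lra)) as [hc0 [hc1 _]].
    assert (hX : 0 <= K * ilog d ^ 2 / t).
    { unfold Rdiv. apply Rmult_le_pos; [nra | apply Rlt_le, Rinv_0_lt_compat; lra]. }
    assert (hY : 0 <= K * c_phase * (ilog d ^ 3 / d ^ 2) / t ^ 2).
    { destruct (small_z_bounds d ltac:(lra)) as [[hv _] _]. pose proof c_phase_nonneg.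
      unfold Rdiv. repeat apply Rmult_le_pos; try apply pow_le; try lra;
        apply Rlt_le, Rinv_0_lt_compat, pow_lt; lra. }
    unfold Rdiv in *. nra. }
  assert (htri : forall w x y z, Rabs (w + x - y + z) <= Rabs w + Rabs x + Rabs y + Rabs z).
  { intros w x y z. unfold Rabs. repeat destruct Rcase_abs; lra. }
  pose proof (Rabs_triang (B b) (RInt f b (2 * z0))).
  rewrite hsplit. eapply Rle_trans; [apply htri|]. lra.
Qed.

Lemma osc_RInt_decay_large_t a t : / z0 ^ 2 <= t -> ex_RInt (osc a m t chi E) 0 (2 * z0) ->
  Rabs (RInt (osc a m t chi E) 0 (2 * z0)) <= 4 * c_decay / (t * ln t ^ 2).
Proof.
  intros ht hI.
  assert (ht0 : 0 < t) by (eapply Rlt_le_trans; [apply Rinv_0_lt_compat, pow_lt|]; eauto).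
  set (s := sqrt t). assert (hs : 0 < s) by (apply sqrt_lt_R0; lra).
  assert (hss : s * s = t) by (apply sqrt_sqrt; lra).
  set (d := / s). assert (hd0 : 0 < d) by (apply Rinv_0_lt_compat; lra).
  assert (hdd : d * d = / t) by (unfold d; rewrite <- hss; field; lra).
  assert (hd : d <= z0).
  { assert (d * d <= z0 * z0).
    { rewrite hdd. replace (z0 * z0) with (/ / z0 ^ 2) by (field; lra).
      apply Rinv_le_contravar; [apply Rinv_0_lt_compat, pow_lt|]; lra. }
    nra. }
  pose proof (osc_RInt_split_le a t d ht0 (conj hd0 hd) hI) as h.
  destruct (small_z_bounds d ltac:(lra)) as [[hv hv3] _].
  set (v := ilog d) in *.
  assert (hlt : ln t = 2 / v).
  { unfold v, ilog, d. rewrite ln_Rinv, Ropp_involutive, <- hss, ln_mult by lra.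
    assert (0 < ln s) by (unfold v, ilog, d in hv; rewrite ln_Rinv, Ropp_involutive in hv by lra;
                          apply Rinv_0_lt_compat in hv; rewrite Rinv_inv in hv; exact hv).
    field. lra. }
  eapply Rle_trans; [exact h|].
  rewrite hlt. replace (4 * c_decay / (t * (2 / v) ^ 2)) with (c_decay * v ^ 2 / t) by (field; lra).
  apply Rle_trans with (((c_amp + M0 * K) * v ^ 2 + ((M1 + 2 * M0) * K * c_phase + c_ibp) * v ^ 3) / t).
  - right. unfold d. rewrite <- hss. field. lra.
  - unfold c_decay, Rdiv. apply Rmult_le_compat_r; [apply Rlt_le, Rinv_0_lt_compat; lra|].
    destruct chi_bounds_nonneg as [hM0 [hM1 _]]. pose proof c_ibp_nonneg. pose proof c_phase_nonneg.
    assert (0 <= (M1 + 2 * M0) * K * c_phase + c_ibp) by (apply Rplus_le_le_0_compat; [repeat apply Rmult_le_pos|]; lra).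
    assert (v ^ 3 <= v ^ 2) by nra.
    nra.
Qed.

Lemma osc_RInt_decay_small_t a t : 1 < t < / z0 ^ 2 -> ex_RInt (osc a m t chi E) 0 (2 * z0) ->
  Rabs (RInt (osc a m t chi E) 0 (2 * z0)) <= 2 * c_amp / z0 ^ 5 / (t * ln t ^ 2).
Proof.
  intros ht hI.
  assert (hl : 0 < ln t) by (rewrite <- ln_1; apply ln_increasing; lra).
  pose proof (ln_lt_self t ltac:(lra)) as hlt.
  assert (hq : 0 < t * ln t ^ 2) by (apply Rmult_lt_0_compat; [lra | apply pow_lt; lra]).
  assert (hq6 : t * ln t ^ 2 <= / z0 ^ 6).
  { replace (/ z0 ^ 6) with ((/ z0 ^ 2) ^ 3) by (field; lra).
    apply Rle_trans with (t ^ 3); [|apply pow_incr; lra].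
    replace (t ^ 3) with (t * t ^ 2) by ring.
    apply Rmult_le_compat_l; [lra | apply pow_incr; lra]. }
  pose proof (osc_RInt_tail_le a t 0 ltac:(lra) hI) as h.
  pose proof c_amp_nonneg.
  apply Rmult_le_reg_r with (t * ln t ^ 2); [exact hq|].
  replace (2 * c_amp / z0 ^ 5 / (t * ln t ^ 2) * (t * ln t ^ 2)) with (2 * z0 * c_amp * / z0 ^ 6)
    by (field; split; lra).
  apply Rle_trans with (2 * z0 * c_amp * (t * ln t ^ 2)).
  - apply Rmult_le_compat_r; lra.
  - apply Rmult_le_compat_l; [nra | exact hq6].
Qed.

Lemma osc_RInt_decay : exists C, forall a t, 2 < t -> ex_RInt (osc a m t chi E) 0 (2 * z0) ->
  Rabs (RInt (osc a m t chi E) 0 (2 * z0)) <= C / (t * ln t ^ 2).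
Proof.
  assert (hdecay : 0 <= 4 * c_decay).
  { destruct chi_bounds_nonneg as [hM0 [hM1 _]]. pose proof c_amp_nonneg. pose proof c_ibp_nonneg.
    pose proof c_phase_nonneg. unfold c_decay.
    assert (0 <= M0 * K) by (apply Rmult_le_pos; lra).
    assert (0 <= (M1 + 2 * M0) * K * c_phase) by (repeat apply Rmult_le_pos; lra). lra. }
  assert (hsmall : 0 <= 2 * c_amp / z0 ^ 5).
  { pose proof c_amp_nonneg. unfold Rdiv. apply Rmult_le_pos; [lra | apply Rlt_le, Rinv_0_lt_compat, pow_lt; lra]. }
  exists (4 * c_decay + 2 * c_amp / z0 ^ 5). intros a t ht hI.
  assert (hq : 0 < / (t * ln t ^ 2)).
  { apply Rinv_0_lt_compat, Rmult_lt_0_compat; [lra|]. apply pow_lt. rewrite <- ln_1. apply ln_increasing; lra. }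
  unfold Rdiv in *. rewrite Rmult_plus_distr_r.
  destruct (Rle_lt_dec (/ z0 ^ 2) t) as [large | small].
  - pose proof (osc_RInt_decay_large_t a t large hI). nra.
  - pose proof (osc_RInt_decay_small_t a t ltac:(lra) hI). nra.
Qed.

End OscillatoryIntegral.

Theorem corollary4p3 :
  exists z1 : R, 0 < z1 /\
  forall (z0 m : R) (chi E E1 E2 : R -> R) (K : R),
    0 < z0 -> z0 < z1 -> 0 < m ->
    smooth chi ->
    (forall z, chi (- z) = chi z) ->
    (forall z, Rabs z < z0 -> chi z = 1) ->
    (forall z, Rabs z > 2 * z0 -> chi z = 0) ->
    (forall z, 0 < z < 2 * z0 ->
       derivable_pt_lim E z (E1 z) /\ derivable_pt_lim E1 z (E2 z)) ->
    (forall z, 0 < z < 2 * z0 ->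
       Rabs (E z) <= K * Rabs (/ (ln z) ^ 2) /\
       Rabs (E1 z) <= K * Rabs (- 2 / ((ln z) ^ 3 * z)) /\
       Rabs (E2 z) <= K * Rabs (6 / ((ln z) ^ 4 * z ^ 2) + 2 / ((ln z) ^ 3 * z ^ 2))) ->
    exists C : R, forall t : R, t > 2 ->
      forall (pr_re : Riemann_integrable (re_integrand m t chi E) 0 (2 * z0))
             (pr_im : Riemann_integrable (im_integrand m t chi E) 0 (2 * z0)),
        sqrt (RiemannInt pr_re ^ 2 + RiemannInt pr_im ^ 2)
          <= C / (t * (ln t) ^ 2).
Proof.
  exists (/ 60). split; [lra|].
  (* Evenness of chi and chi = 1 near 0 play no role in the bound. *)
  intros z0 m chi E E1 E2 K hz0 hz1 hm hchi _ _ hout hder hbnd.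
  assert (hz0' : 2 * z0 <= / 27) by lra.
  destruct (smooth_C2_bounds chi 0 (2 * z0) hchi ltac:(lra))
    as (D1 & D2 & M0 & M1 & M2 & hD1 & hD2 & hM).
  destruct (edge_values_of_eq0_right chi D1 D2 (2 * z0) hD1 hD2) as [hedge hedge'].
  { intros z hz. apply hout. rewrite Rabs_right; lra. }
  assert (hK : 0 <= K).
  { destruct (hbnd z0 ltac:(lra)) as [hb _]. pose proof (ln_le_neg3 z0 hz0 ltac:(lra)).
    assert (0 < Rabs (/ ln z0 ^ 2)) by (apply Rabs_pos_lt, Rinv_neq_0_compat, pow_nonzero; lra).
    pose proof (Rabs_pos (E z0)). nra. }
  destruct (osc_RInt_decay m z0 K M0 M1 M2 chi D1 D2 E E1 E2 hm hz0 hz0' hK hD1 hD2 hM hedge hedge')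
    as [C hC].
  - intros z hz. destruct (hder z hz). split; now apply is_derive_Reals.
  - intros z hz. destruct (hbnd z hz) as [b0 [b1 b2]]. apply log_power_bounds_ilog; auto; lra.
  - exists (2 * C). intros t ht pr_re pr_im.
    pose proof (ex_RInt_Reals_1 _ _ _ pr_re) as hre. pose proof (ex_RInt_Reals_1 _ _ _ pr_im) as him.
    rewrite <- (RInt_Reals _ _ _ pr_re), <- (RInt_Reals _ _ _ pr_im).
    rewrite re_integrand_osc in hre |- *. rewrite im_integrand_osc in him |- *.
    eapply Rle_trans; [apply sqrt_sum_sq_le|].
    pose proof (hC 0 t ht hre). pose proof (hC (PI / 2) t ht him). unfold Rdiv in *. lra.
Qed.
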